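(* Let $\mathcal{M}$ be a finite Markov decision process with state set $S$, action set $A$, transition function $P$, and a set of accepting states $B \subseteq S$. Let $\gamma_B:(0,1)\to(0,1)$ be a function of $\gamma$ satisfying $$\lim_{\gamma \to 1^-} \frac{1-\gamma}{1-\gamma_B(\gamma)} = 0.$$ For $\gamma\in(0,1)$ define $R_B(s) = 1-\gamma_B$ if $s\in B$ and $0$ otherwise, and $\Gamma_B(s) = \gamma_B$ if $s\in B$ and $\gamma$ otherwise (with $\gamma_B=\gamma_B(\gamma)$). For a path $\sigma$ let $$G_t(\sigma) = \sum_{i=0}^{\infty} R_B(\sigma[t+i]) \prod_{j=0}^{i-1} \Gamma_B(\sigma[t+j]),$$ with the empty product equal to $1$, and for a memoryless policy $\pi$ let $v^\gamma_\pi(s)$ be the expected value of $G_0(\sigma)$ over random paths of the Markov chain $\mathcal{M}_\pi$ induced by $\pi$ started at $s$. Let $B_\pi$ be the set of states $s\in B$ that belong to some bottom strongly connected component of $\mathcal{M}_\pi$. Then for every memoryless policy $\pi$ and every $s\in B_\pi$, $$\lim_{\gamma\to1^-} v^\gamma_\pi(s) = 1.$$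
   Context: A finite MDP consists of a finite state set $S$, a finite action set $A$, for each state $s$ a nonempty set $A(s)\subseteq A$ of enabled actions, and transition probabilities $P:S\times A\times S\to[0,1]$ with $\sum_{s'}P(s,a,s')=1$ for $a\in A(s)$. A memoryless policy is a map $\pi:S\to A$ with $\pi(s)\in A(s)$; it induces the Markov chain $\mathcal{M}_\pi$ on $S$ with transition probabilities $P_\pi(s,s')=P(s,\pi(s),s')$. A bottom strongly connected component (BSCC) of a Markov chain is a strongly connected component of its transition graph (edges where the transition probability is positive) with no outgoing transitions. *)

From HB Require Import structures.
From mathcomp Require Import all_boot all_order all_algebra.
From mathcomp Require Import all_classical all_reals all_analysis.
Set Implicit Arguments. Unset Strict Implicit. Unset Printing Implicit Defensive.
Import Order.TTheory GRing.Theory Num.Theory.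
Local Open Scope ring_scope.

Section MDP.
Variables (R : realType) (S A : finType).

Definition is_mdp (en : S -> {set A}) (P : S -> A -> S -> R) : Prop :=
  (forall s, en s != finset.set0) /\
  (forall s a s', 0 <= P s a s') /\
  (forall s a, a \in en s -> \sum_(s' : S) P s a s' = 1).

Definition is_policy (en : S -> {set A}) (pi : S -> A) : Prop :=
  forall s, pi s \in en s.

Definition chain_edge (P : S -> A -> S -> R) (pi : S -> A) : rel S :=
  fun x y => 0 < P x (pi x) y.

Definition is_scc (e : rel S) (C : {set S}) : Prop :=
  exists x, C = [set y | connect e x y && connect e y x].

Definition is_bscc (e : rel S) (C : {set S}) : Prop :=
  is_scc e C /\ (forall x y, x \in C -> e x y -> y \in C).

Definition B_pi (P : S -> A -> S -> R) (pi : S -> A) (B : {set S}) : {set S} :=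
  [set s in B | `[< exists C, is_bscc (chain_edge P pi) C /\ s \in C >]].

Definition RB (B : {set S}) (gB : R) (s : S) : R :=
  if s \in B then 1 - gB else 0.
Definition GammaB (B : {set S}) (g gB : R) (s : S) : R :=
  if s \in B then gB else g.

Definition pst n (p : {ffun 'I_n.+1 -> S}) (k : nat) : S := p (inord k).

(* Expected value of the i-th summand of G_0 over random paths of M_pi from s:
   E[ R_B(sigma[i]) * prod_{j<i} Gamma_B(sigma[j]) ], computed as the sum over
   all finite path prefixes sigma[0..i] starting at s of their probability. *)
Definition exp_term (P : S -> A -> S -> R) (pi : S -> A) (B : {set S})
    (g gB : R) (s : S) (i : nat) : R :=
  \sum_(p : {ffun 'I_i.+1 -> S} | pst p 0 == s)
     ((\prod_(j < i) P (pst p j) (pi (pst p j)) (pst p j.+1)) *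
      ((\prod_(j < i) GammaB B g gB (pst p j)) * RB B gB (pst p i))).

(* v^gamma_pi(s) = E[G_0] = sum_i E[i-th summand] (nonnegative terms, so the
   expectation of the series is the series of expectations). *)
Definition value (P : S -> A -> S -> R) (pi : S -> A) (B : {set S})
    (g gB : R) (s : S) : R :=
  limn (fun n => \sum_(0 <= i < n) exp_term P pi B g gB s i).

End MDP.

From HB Require Import structures.
From mathcomp Require Import all_boot all_order all_algebra.
From mathcomp Require Import all_classical all_reals all_analysis.
From mathcomp Require Import ring lra.

Set Implicit Arguments.
Unset Strict Implicit.
Unset Printing Implicit Defensive.
Import Order.TTheory GRing.Theory Num.Theory numFieldNormedType.Exports.
Local Open Scope ring_scope.
Local Open Scope classical_set_scope.

(* On a bottom SCC C of M_pi every state reaches B. With d x the graph distance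
   to B, p the least positive transition probability and c = p/2, the potential
   u x = c^(d x - max_C d) lies in [0, Z] with Z = c^(- max_C d), and it grows
   by at least 1 in expectation at each step from C \ B. Hence
   L = 1 - (1 - g) (Z/(1 - gB) + Z - u) is a subsolution on C of the Bellman
   recursion v = R_B + Gamma_B P_pi v, which contracts with factor max(g, gB), so
   1 >= v s >= 1 - Z ((1 - g)/(1 - gB) + (1 - g)) --> 1. *)

Section PathCons.
Variable S : finType.

Definition ffun_cons {i} (s : S) (q : {ffun 'I_i.+1 -> S}) : {ffun 'I_i.+2 -> S} :=
  [ffun k : 'I_i.+2 => if (k : nat) is k'.+1 then q (inord k') else s].

Definition ffun_behead {i} (p : {ffun 'I_i.+2 -> S}) : {ffun 'I_i.+1 -> S} :=
  [ffun k : 'I_i.+1 => p (inord k.+1)].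

Lemma pst_cons0 i s q : pst (@ffun_cons i s q) 0 = s.
Proof. by rewrite /pst ffunE inordK. Qed.

Lemma pst_consS i s q j : (j < i.+1)%N -> pst (@ffun_cons i s q) j.+1 = pst q j.
Proof. by move=> lt_j_i; rewrite /pst ffunE inordK. Qed.

Lemma ffun_consK i s : cancel (@ffun_cons i s) (@ffun_behead i).
Proof.
move=> q; apply/ffunP => k; rewrite !ffunE inordK /=; last by rewrite ltnS ltn_ord.
by congr (q _); apply: val_inj; rewrite /= inordK.
Qed.

Lemma ffun_beheadK i (p : {ffun 'I_i.+2 -> S}) :
  ffun_cons (pst p 0) (ffun_behead p) = p.
Proof.
apply/ffunP => -[[|k] lt_k] /=; rewrite !ffunE /pst /=.
  by congr (p _); apply: val_inj; rewrite /= inordK.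
by rewrite ffunE; congr (p _); apply: val_inj; rewrite /= !inordK.
Qed.
End PathCons.

Section FirstStepDecomposition.
Variables (R : realType) (S A : finType) (P : S -> A -> S -> R) (pi : S -> A)
  (B : {set S}) (g gB : R).
Local Notation Q x y := (P x (pi x) y).
Local Notation exp_term := (exp_term P pi B g gB).

Lemma exp_term0 s : exp_term s 0 = RB B gB s.
Proof.
rewrite /exp_term (eq_bigl (pred1 [ffun => s])); last first.
  move=> p /=; apply/eqP/eqP => [<-|->]; last by rewrite /pst ffunE.
  apply/ffunP => i; rewrite ffunE /pst ord1.
  by congr (p _); apply: val_inj; rewrite /= inordK.
by rewrite big_pred1_eq !big_ord0 !mul1r /pst ffunE.
Qed.

Lemma exp_termS s i :
  exp_term s i.+1 = GammaB B g gB s * \sum_y Q s y * exp_term y i.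
Proof.
rewrite /exp_term (reindex_onto (@ffun_cons _ i s) (@ffun_behead _ i)); last first.
  by move=> p /eqP <-; exact: ffun_beheadK.
rewrite (eq_bigl predT); last by move=> q; rewrite pst_cons0 ffun_consK !eqxx.
set T := fun q : {ffun 'I_i.+1 -> S} =>
  \prod_(j < i) Q (pst q j) (pst q j.+1) *
  (\prod_(j < i) GammaB B g gB (pst q j) * RB B gB (pst q i)).
rewrite (eq_bigr (fun q => GammaB B g gB s * (Q s (pst q 0) * T q))); last first.
  move=> q _; rewrite /T big_ord_recl [X in _ * (X * _)]big_ord_recl /=.
  have pst_bump (j : 'I_i) : pst (ffun_cons s q) (bump 0 j) = pst q j.
    by rewrite /bump /= ?add1n pst_consS // ltnS ltnW.
  have pst_bumpS (j : 'I_i) : pst (ffun_cons s q) (bump 0 j).+1 = pst q j.+1.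
    by rewrite /bump /= ?add1n pst_consS ?ltnS.
  under eq_bigr do rewrite pst_bump pst_bumpS.
  under [X in _ * (_ * X * _) = _]eq_bigr do rewrite pst_bump.
  rewrite pst_cons0 !pst_consS //; ring.
rewrite -big_distrr /=; congr (_ * _).
rewrite (partition_big (fun q : {ffun 'I_i.+1 -> S} => pst q 0) predT) //=.
apply: eq_bigr => y _; rewrite big_distrr /=.
by apply: eq_bigr => q /eqP ->.
Qed.

Definition value_upto n x := \sum_(0 <= i < n) exp_term x i.

Lemma value_upto0 x : value_upto 0 x = 0.
Proof. by rewrite /value_upto big_geq. Qed.

Lemma value_uptoS n x :
  value_upto n.+1 x = RB B gB x + GammaB B g gB x * \sum_y Q x y * value_upto n y.
Proof.
rewrite /value_upto big_nat_recl // exp_term0; congr (_ + _).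
under eq_bigr do rewrite exp_termS.
rewrite -big_distrr /= exchange_big /=; congr (_ * _).
by apply: eq_bigr => y _; rewrite big_distrr.
Qed.
End FirstStepDecomposition.

Section ValueBounds.
Variables (R : realType) (S A : finType) (P : S -> A -> S -> R) (pi : S -> A)
  (B : {set S}) (g gB : R).
Hypothesis P_ge0 : forall x a y, 0 <= P x a y.
Hypothesis P_sum1 : forall x, \sum_y P x (pi x) y = 1.
Hypotheses (g_gt0 : 0 < g) (g_lt1 : g < 1) (gB_gt0 : 0 < gB) (gB_lt1 : gB < 1).
Local Notation Q x y := (P x (pi x) y).
Local Notation value_upto := (value_upto P pi B g gB).
Local Notation value := (value P pi B g gB).

Lemma RB_ge0 x : 0 <= RB B gB x.
Proof. by rewrite /RB; case: ifP => _; [rewrite subr_ge0 ltW|]. Qed.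

Lemma GammaB_ge0 x : 0 <= GammaB B g gB x.
Proof. by rewrite /GammaB; case: ifP => _; rewrite ltW. Qed.

Lemma RB_GammaB_le1 x : RB B gB x + GammaB B g gB x <= 1.
Proof. by rewrite /RB /GammaB; case: ifP => _; rewrite ?subrK // add0r ltW. Qed.

Lemma GammaB_le_max x : GammaB B g gB x <= Num.max g gB.
Proof. by rewrite /GammaB; case: ifP; rewrite le_max lexx ?orbT. Qed.

Lemma avg_le x (f : S -> R) M :
  (forall y, 0 < Q x y -> f y <= M) -> \sum_y Q x y * f y <= M.
Proof.
move=> f_le; rewrite -[leRHS]mul1r -(P_sum1 x) big_distrl /=.
apply: ler_sum => y _; have [Q_gt0|] := ltP 0 (Q x y).
  by rewrite ler_wpM2l ?f_le ?ltW.
by move=> Q_le0; rewrite (@le_anti _ _ (Q x y) 0) ?Q_le0 ?P_ge0 // !mul0r.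
Qed.

Lemma exp_term_ge0 x i : 0 <= exp_term P pi B g gB x i.
Proof.
apply: sumr_ge0 => p _; rewrite mulr_ge0 ?mulr_ge0 ?RB_ge0 //.
  by apply: prodr_ge0 => j _.
by apply: prodr_ge0 => j _; exact: GammaB_ge0.
Qed.

Lemma value_upto_le1 n x : value_upto n x <= 1.
Proof.
elim: n x => [|n IH] x; first by rewrite value_upto0 ler01.
rewrite value_uptoS; apply: le_trans (RB_GammaB_le1 x); rewrite lerD2l.
by rewrite ler_piMr ?GammaB_ge0 ?avg_le.
Qed.

Lemma value_upto_nondecreasing x : nondecreasing_seq (value_upto ^~ x).
Proof.
by apply/nondecreasing_seqP => n; rewrite /value_upto big_nat_recr //= lerDl exp_term_ge0.
Qed.

Lemma value_upto_cvg x : cvgn (value_upto ^~ x).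
Proof.
apply: nondecreasing_is_cvgn (value_upto_nondecreasing x) _.
by exists 1 => _ [n _ <-]; exact: value_upto_le1.
Qed.

Lemma value_le1 x : value x <= 1.
Proof.
apply: limr_le; first exact: value_upto_cvg.
by apply: nearW => n; exact: value_upto_le1.
Qed.

Lemma value_upto_le_value n x : value_upto n x <= value x.
Proof. exact: (nondecreasing_cvgn_le (value_upto_nondecreasing x) (@value_upto_cvg x)). Qed.

Section Subsolution.
Variable C : {set S}.
Hypothesis C_closed : forall x y, x \in C -> 0 < Q x y -> y \in C.
Variable L : S -> R.
Hypothesis L_le1 : forall x, L x <= 1.
Hypothesis L_sub : forall x, x \in C ->
  L x <= RB B gB x + GammaB B g gB x * \sum_y Q x y * L y.

Lemma subsolution_gap n x : x \in C -> L x - value_upto n x <= Num.max g gB ^+ n.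
Proof.
elim: n x => [|n IH] x xC; first by rewrite value_upto0 subr0 expr0.
set G := GammaB B g gB x; set th := Num.max g gB.
have gap_avg : \sum_y Q x y * (L y - value_upto n y) <= th ^+ n.
  by apply: avg_le => y Qxy; apply: IH; exact: C_closed Qxy.
have gap_step : G * \sum_y Q x y * (L y - value_upto n y) <= th ^+ n.+1.
  apply: le_trans (ler_wpM2l (GammaB_ge0 x) gap_avg) _.
  by rewrite exprS ler_wpM2r ?exprn_ge0 ?GammaB_le_max // le_max ltW.
have split_gap : G * \sum_y Q x y * (L y - value_upto n y) =
    G * \sum_y Q x y * L y - G * \sum_y Q x y * value_upto n y.
  by rewrite -mulrBr -sumrB; under eq_bigr do rewrite mulrBr.
have := L_sub xC; rewrite value_uptoS -/G; lra.
Qed.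

Lemma subsolution_le_value x : x \in C -> L x <= value x.
Proof.
move=> xC; have th_lt1 : `|Num.max g gB| < 1.
  by rewrite ger0_norm ?le_max ?ltW // gt_max g_lt1 gB_lt1.
rewrite -subr_le0 -(cvg_lim _ (cvg_expr th_lt1)) //.
apply: limr_ge; first exact: cvgP (cvg_expr th_lt1).
apply: nearW => n; have := subsolution_gap n xC; have := value_upto_le_value n x; lra.
Qed.
End Subsolution.

Lemma sum_affine x (f : S -> R) a b :
  \sum_y Q x y * (a + b * f y) = a + b * \sum_y Q x y * f y.
Proof.
rewrite -[a in RHS]mul1r -(P_sum1 x) big_distrl big_distrr -big_split /=.
by apply: eq_bigr => y _; ring.
Qed.

Lemma drift_value_lb (C : {set S}) (u : S -> R) (Z : R) :
  (forall x y, x \in C -> 0 < Q x y -> y \in C) ->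
  (forall x, 0 <= u x <= Z) ->
  (forall x, x \in C -> x \notin B -> u x + 1 <= \sum_y Q x y * u y) ->
  forall s, s \in C -> 1 - Z * ((1 - g) / (1 - gB) + (1 - g)) <= value s.
Proof.
move=> C_closed u_bnd u_drift s sC.
have Z_ge0 : 0 <= Z by case/andP: (u_bnd s); exact: le_trans.
set K := Z / (1 - gB).
have K_ge0 : 0 <= K by rewrite divr_ge0 // subr_ge0 ltW.
have KgB : K * (1 - gB) = Z by rewrite divfK // subr_eq0 gt_eqF.
have one_g_ge0 : 0 <= 1 - g by rewrite subr_ge0 ltW.
have one_gB_ge0 : 0 <= 1 - gB by rewrite subr_ge0 ltW.
have gB_ge0 := ltW gB_gt0.
pose L x := 1 - (1 - g) * (K + Z) + (1 - g) * u x.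
have L_le1 x : L x <= 1.
  have [u_ge0 u_leZ] := andP (u_bnd x).
  have u_le : u x <= K + Z by lra.
  have := ler_wpM2l one_g_ge0 u_le; rewrite /L; lra.
apply: le_trans (subsolution_le_value C_closed L_le1 _ sC).
  have -> : Z * ((1 - g) / (1 - gB) + (1 - g)) = (1 - g) * (K + Z) by rewrite /K; ring.
  by rewrite lerDl mulr_ge0 // (andP (u_bnd s)).1.
move=> x xC; rewrite sum_affine.
set U := \sum_y Q x y * u y.
have U_ge0 : 0 <= U by apply: sumr_ge0 => y _; rewrite mulr_ge0 // (andP (u_bnd y)).1.
have U_leZ : U <= Z by apply: avg_le => y _; exact: (andP (u_bnd y)).2.
have [u_ge0 u_leZ] := andP (u_bnd x).
rewrite /L /RB /GammaB; case: ifP => xB.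
  have : 0 <= (1 - g) * (Z * (1 - gB) + (Z - u x) + gB * U).
    by apply: mulr_ge0 => //; nra.
  have : (1 - g) * (K * (1 - gB)) = (1 - g) * Z by rewrite KgB.
  nra.
have := u_drift x xC (negbT xB); rewrite -/U => drift.
have : 0 <= (1 - g) * ((1 - g) * (K + Z - U) + (U - u x - 1)).
  by apply: mulr_ge0 => //; nra.
nra.
Qed.
End ValueBounds.

Section DistanceToSet.
Variables (T : finType) (e : rel T) (B : {set T}).

Fixpoint reach_within k x : bool :=
  if k is k'.+1 then reach_within k' x || [exists y, e x y && reach_within k' y]
  else x \in B.

Lemma connect_reach_within x b : connect e x b -> b \in B -> exists k, reach_within k x.
Proof.
case/connectP => p; elim: p x => [|y p IH] x /=; first by move=> _ -> bB; exists 0.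
case/andP => exy py /(IH y py) /[apply] -[k yk].
by exists k.+1; apply/orP; right; apply/existsP; exists y; rewrite exy.
Qed.

(* Junk value 0 when B is unreachable from x. *)
Definition dist_to x : nat :=
  if pselect (exists k, reach_within k x) is left ex then ex_minn ex else 0.

Lemma dist_toP x k :
  reach_within k x -> reach_within (dist_to x) x /\ (dist_to x <= k)%N.
Proof.
move=> xk; rewrite /dist_to; case: pselect => [ex | []]; last by exists k.
by case: ex_minnP => m xm m_min; split=> //; exact: m_min.
Qed.

Lemma dist_to_decr x k : reach_within k x -> x \notin B ->
  exists2 y, e x y & (dist_to y < dist_to x)%N.
Proof.
case/dist_toP => + _; case: (dist_to x) (@dist_toP x) => [|m] dist_min /=.
  by move=> ->.
case/orP => [xm | /existsP[y /andP[exy ym]]] _.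
  by have [_] := dist_min _ xm; rewrite ltnn.
by exists y => //; have [_] := dist_toP ym; rewrite ltnS.
Qed.
End DistanceToSet.

Section BottomComponentPotential.
Variables (R : realType) (S A : finType) (P : S -> A -> S -> R) (pi : S -> A)
  (B : {set S}).
Hypothesis P_ge0 : forall x a y, 0 <= P x a y.
Local Notation Q x y := (P x (pi x) y).
Local Notation e := (chain_edge P pi).

Definition min_pos_trans : R :=
  \big[Num.min/1]_(xy : S * S | 0 < Q xy.1 xy.2) Q xy.1 xy.2.

Lemma min_pos_trans_gt0 : 0 < min_pos_trans.
Proof. exact: lt_bigmin. Qed.

Lemma min_pos_trans_le1 : min_pos_trans <= 1.
Proof. exact: bigmin_le_id. Qed.

Lemma min_pos_trans_le x y : 0 < Q x y -> min_pos_trans <= Q x y.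
Proof. exact: (@bigmin_le_cond _ _ _ 1 (x, y)). Qed.

Lemma bscc_reach_within C s x : is_bscc e C -> s \in C -> s \in B -> x \in C ->
  exists k, reach_within e B k x.
Proof.
case=> -[x0 ->] _; rewrite !inE => /andP[x0s _] sB /andP[_ xx0].
exact: connect_reach_within (connect_trans xx0 x0s) sB.
Qed.

Lemma bscc_drift_potential C s : is_bscc e C -> s \in C -> s \in B ->
  exists (u : S -> R) (Z : R), (forall x, 0 <= u x <= Z) /\
    forall x, x \in C -> x \notin B -> u x + 1 <= \sum_y Q x y * u y.
Proof.
move=> C_bscc sC sB.
pose c := min_pos_trans / 2.
have c_gt0 : 0 < c by rewrite divr_gt0 ?min_pos_trans_gt0.
have c_ge0 := ltW c_gt0.
have c_le1 : c <= 1 by have := min_pos_trans_le1; rewrite /c; lra.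
pose d := dist_to e B; pose N := (\max_(x in C) d x)%N.
pose u x := c ^+ d x / c ^+ N.
have u_ge0 x : 0 <= u x by rewrite divr_ge0 ?exprn_ge0.
exists u, (c ^+ N)^-1; split.
  move=> x; rewrite u_ge0 -[leRHS]mul1r; apply: ler_wpM2r.
    by rewrite invr_ge0 exprn_ge0.
  by rewrite exprn_ile1.
move=> x xC xB.
have [k xk] := bscc_reach_within C_bscc sC sB xC.
have [y Qxy dy_lt_dx] := dist_to_decr xk xB.
have ux_ge1 : 1 <= u x.
  rewrite ler_pdivlMr ?exprn_gt0 // mul1r (ler_wiXn2l c_ge0 c_le1) //.
  exact: (leq_bigmax_cond x xC).
have double_ux : 2 * u x <= Q x y * u y.
  have two_c_le : 2 * c <= Q x y.
    by rewrite /c mulrC divfK ?pnatr_eq0 // min_pos_trans_le.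
  apply: le_trans (ler_wpM2r (u_ge0 y) two_c_le).
  rewrite /u -mulrA ler_wpM2l // mulrA -exprS; apply: ler_wpM2r.
    by rewrite invr_ge0 exprn_ge0.
  exact: ler_wiXn2l c_ge0 c_le1 _ _ dy_lt_dx.
have : Q x y * u y <= \sum_z Q x z * u z.
  by rewrite (bigD1 y) //= lerDl sumr_ge0 // => z _; rewrite mulr_ge0.
lra.
Qed.
End BottomComponentPotential.

Theorem lemma3 (R : realType) (S A : finType) (en : S -> {set A})
    (P : S -> A -> S -> R) (B : {set S}) (gammaB : R -> R) :
  is_mdp en P ->
  (forall g : R, 0 < g < 1 -> 0 < gammaB g < 1) ->
  (1 - g) / (1 - gammaB g) @[g --> (1 : R)^'-] --> (0 : R) ->
  forall pi : S -> A, is_policy en pi ->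
  forall s : S, s \in B_pi P pi B ->
  value P pi B g (gammaB g) s @[g --> (1 : R)^'-] --> (1 : R).
Proof.
move=> [_ [P_ge0 P_en]] gB01 gB_rate pi pi_en s.
have P_sum1 x : \sum_y P x (pi x) y = 1 by exact: P_en (pi_en x).
rewrite inE => /andP[sB /asboolP[C [C_bscc sC]]].
have [u [Z [u_bnd u_drift]]] := bscc_drift_potential P_ge0 C_bscc sC sB.
apply: (@squeeze_cvgr _ _ _ _ (fun g => 1 - Z * ((1 - g) / (1 - gammaB g) + (1 - g)))
  (fun _ => 1)); last exact: cvg_cst.
  near=> g.
  have g_gt0 : 0 < g by near: g; exact: nbhs_left_gt.
  have g_lt1 : g < 1 by near: g; exact: nbhs_left_lt.
  have /andP[gB_gt0 gB_lt1] := gB01 g (introT andP (conj g_gt0 g_lt1)).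
  rewrite value_le1 // andbT.
  exact: (drift_value_lb P_ge0 P_sum1 g_gt0 g_lt1 gB_gt0 gB_lt1 C_bscc.2 u_bnd u_drift sC).
have one_sub_cvg : (1 - g) @[g --> (1 : R)^'-] --> (0 : R).
  apply: cvg_at_left_filter; rewrite -(subrr (1 : R)).
  exact: cvgB (cvg_cst _) cvg_id.
rewrite -[X in _ --> X](subr0 (1 : R)); apply: cvgB; first exact: cvg_cst.
rewrite -(mulr0 Z) -(addr0 (0 : R)); apply: cvgM; first exact: cvg_cst.
exact: cvgD.
Unshelve. all: by end_near.
Qed.
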